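(* Let $F\in\mathfrak{g}$ be principal nilpotent and let $F'\in Z(F)$. Then $\mathrm{Im}(\mathrm{ad}_{F'})\subset\mathrm{Im}(\mathrm{ad}_F)$.
   Context: $\mathfrak{g}$ is a complex simple Lie algebra. $F$ is principal nilpotent if $\mathrm{ad}_F$ is nilpotent and $Z(F)=\{y\in\mathfrak{g}:[F,y]=0\}$ has dimension $\mathrm{rk}(\mathfrak{g})$. $\mathrm{Im}(\mathrm{ad}_x)=\{[x,y]:y\in\mathfrak{g}\}$. *)

From mathcomp Require Import all_boot all_algebra.
From mathcomp Require Import reals complex.
Set Implicit Arguments. Unset Strict Implicit. Unset Printing Implicit Defensive.
Import GRing.Theory.
Local Open Scope ring_scope.

Definition is_lie_bracket (K : fieldType) (V : vectType K) (br : V -> V -> V) : Prop :=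
  [/\ (forall z, linear (br ^~ z)),
      (forall x, linear (br x)),
      (forall x, br x x = 0) &
      (forall x y z, br x (br y z) + br y (br z x) + br z (br x y) = 0)].

Definition lie_ideal (K : fieldType) (V : vectType K) (br : V -> V -> V)
  (I : {vspace V}) : Prop :=
  forall x y, y \in I -> br x y \in I.

Definition simple_lie (K : fieldType) (V : vectType K) (br : V -> V -> V) : Prop :=
  is_lie_bracket br /\ (exists x y, br x y <> 0) /\
  (forall I : {vspace V}, lie_ideal br I -> I = 0%VS \/ I = fullv).

(* ad_x as an element of 'End(V) (br x is linear under is_lie_bracket) *)
Definition ad (K : fieldType) (V : vectType K) (br : V -> V -> V) (x : V) : 'End(V) :=
  linfun (br x).

Definition centralizer (K : fieldType) (V : vectType K) (br : V -> V -> V) (x : V)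
  : {vspace V} := lker (ad br x).

(* rank of g: the minimal dimension of a centralizer Z(x), x \in g
   (= dimension of a Cartan subalgebra; attained at regular elements). *)
Definition is_lie_rank (K : fieldType) (V : vectType K) (br : V -> V -> V) (r : nat) : Prop :=
  (exists x, \dim (centralizer br x) = r) /\ (forall x, (r <= \dim (centralizer br x))%N).

Definition ad_nilpotent (K : fieldType) (V : vectType K) (br : V -> V -> V) (F : V) : Prop :=
  exists n : nat, forall y, iter n (br F) y = 0.

Definition principal_nilpotent (K : fieldType) (V : vectType K) (br : V -> V -> V) (F : V)
  : Prop :=
  ad_nilpotent br F /\ (forall r, is_lie_rank br r -> \dim (centralizer br F) = r).

From HB Require Import structures.
From mathcomp Require Import all_boot all_algebra.
From mathcomp Require Import reals complex.
From Stdlib Require Import Classical.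
Set Implicit Arguments. Unset Strict Implicit. Unset Printing Implicit Defensive.
Import GRing.Theory Num.Theory.
Local Open Scope ring_scope.

(* A principal nilpotent F is regular: ad_F has maximal rank, so
   rank ad_(F + t y) <= rank ad_F for every t. Let F' commute with F and
   suppose ad_y F' is not in Im ad_F. Choose u_1, ..., u_k whose images under
   ad_F form a basis of Im ad_F; then ad_(F + t y) maps u_1, ..., u_k, F'/t to
   ad_F u_i + t ad_y u_i and ad_y F', which stay linearly independent for all
   but finitely many t, so rank ad_(F + t y) > rank ad_F. Hence
   [F', y] = - ad_y F' lies in Im ad_F. *)

Lemma exists_nonzero_nonroot (R : numDomainType) (p : {poly R}) :
  p != 0 -> exists2 s : R, s != 0 & ~~ root p s.
Proof.
move=> p_neq0; pose rs := [seq i.+1%:R : R | i <- iota 0 (size p)].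
have rs_uniq : uniq rs.
  by rewrite map_inj_uniq ?iota_uniq // => i j /eqP; rewrite eqr_nat eqSS => /eqP.
have /allPn[_ /mapP[i _ ->] nroot] : ~~ all (root p) rs.
  apply/negP => all_roots.
  by have := max_poly_roots p_neq0 all_roots rs_uniq; rewrite size_map size_iota ltnn.
by exists i.+1%:R; rewrite ?pnatr_eq0.
Qed.

Lemma row_free_perturb (K : numFieldType) m n (Y N : 'M[K]_(m, n)) :
  row_free Y -> exists2 t : K, t != 0 & row_free (Y + t *: N).
Proof.
case/row_freeP=> Z YZ; pose E := N *m Z.
have [s s_neq0 s_nroot] := exists_nonzero_nonroot (monic_neq0 (char_poly_monic E)).
have t_neq0 : - s^-1 != 0 by rewrite oppr_eq0 invr_eq0.
exists (- s^-1) => //.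
have E_free : row_free (E - s%:M).
  by rewrite -kermx_eq0; move: s_nroot; rewrite -eigenvalue_root_char negbK.
(* (Y + tN) Z = 1 + tE is invertible as soon as -1/t is not an eigenvalue of E. *)
have perturbZ : (Y + - s^-1 *: N) *m Z = - s^-1 *: (E - s%:M).
  rewrite mulmxDl YZ -scalemxAl scalerBr scale_scalar_mx mulNr mulVf //.
  by rewrite (raddfN (@scalar_mx _ _)) opprK addrC.
rewrite /row_free eqn_leq rank_leq_row /=.
by rewrite -{1}(eqP E_free) -(eqmx_scale _ t_neq0) -perturbZ mxrankM_maxl.
Qed.

Lemma row_free_col_row_base (K : fieldType) m n (A : 'M[K]_(m, n)) (w : 'rV_n) :
  ~~ (w <= A)%MS -> row_free (col_mx (row_base A) w).
Proof.
move=> w_notin; rewrite /row_free eqn_leq rank_leq_row /= -addsmxE addn1.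
have : (row_base A < row_base A + w)%MS.
  by rewrite ltmxE addsmxSl /= addsmx_sub submx_refl eq_row_base.
by rewrite ltmxErank => /andP[_]; rewrite eq_row_base.
Qed.

Lemma pencil_max_rank_sub (K : numFieldType) m n (A B : 'M[K]_(m, n)) (u : 'rV_m) :
  (forall t, \rank (A + t *: B)%R <= \rank A)%N -> u *m A = 0 -> (u *m B <= A)%MS.
Proof.
move=> rank_max uA0; apply/idPn => uB_notin.
pose G := row_base A *m pinvmx A.
have GA : G *m A = row_base A by rewrite mulmxKpV ?eq_row_base.
have [t t_neq0 free_t] :=
  row_free_perturb (col_mx (G *m B) 0) (row_free_col_row_base uB_notin).
pose X := col_mx G (t^-1 *: u).
have XAB : X *m (A + t *: B) = col_mx (row_base A) (u *m B) + t *: col_mx (G *m B) 0.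
  rewrite mulmxDr -scalemxAr !mul_col_mx GA -!scalemxAl uA0 scaler0.
  by rewrite !scale_col_mx scaler0 scalerA mulfV // scale1r !add_col_mx addr0 add0r.
have := leq_trans (mxrankM_maxr X (A + t *: B)%R) (rank_max t).
by rewrite XAB (eqP free_t) addn1 ltnn.
Qed.

(* [f2mx f] is the matrix of [f] acting on the internal coordinates [v2r]
   of [V]; [lker] and [\dim] are defined through it. *)
Import VectorInternalTheory.

Section LfunMatrix.
Variables (K : fieldType) (V : vectType K).
Implicit Types (f g : 'End(V)) (v : V).

Lemma v2r_lfun f v : v2r (f v) = v2r v *m f2mx f.
Proof. by rewrite unlock /= r2vK. Qed.

Lemma f2mx_scale_add f g t : f2mx (f + t *: g) = f2mx f + t *: f2mx g.
Proof.
apply/row_matrixP=> i; rewrite !rowE mulmxDr -scalemxAr.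
by rewrite -[delta_mx 0 i]r2vK -!v2r_lfun !lfunE /= !lfunE /= linearD linearZ.
Qed.

Lemma dim_lker f : \dim (lker f) = (dim V - \rank (f2mx f))%N.
Proof. by rewrite /dimv /lker mx2vsK mxrank_ker. Qed.

End LfunMatrix.

Lemma pencil_min_lker_img (K : numFieldType) (V : vectType K) (f g : 'End(V)) v :
  (forall t, \dim (lker f) <= \dim (lker (f + t *: g)%R))%N ->
  v \in lker f -> g v \in limg f.
Proof.
move=> dim_min; rewrite memv_ker => /eqP fv0.
have rank_max t : (\rank (f2mx f + t *: f2mx g)%R <= \rank (f2mx f))%N.
  by move: (dim_min t); rewrite !dim_lker f2mx_scale_add leq_sub2lE ?rank_leq_col.
have vf0 : v2r v *m f2mx f = 0 by rewrite -v2r_lfun fv0 linear0.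
have /submxP[w vgw] := pencil_max_rank_sub rank_max vf0.
apply/memv_imgP; exists (r2v w); rewrite ?memvf //.
by apply: v2r_inj; rewrite !v2r_lfun vgw r2vK.
Qed.

Section LieBracket.
Variables (K : fieldType) (V : vectType K) (br : V -> V -> V).
Hypothesis br_lie : is_lie_bracket br.

Let br_linear_l z : linear (br ^~ z). Proof. by case: br_lie. Qed.
Let br_linear_r x : linear (br x). Proof. by case: br_lie. Qed.
Let br_alt x : br x x = 0. Proof. by case: br_lie. Qed.

Lemma adE x v : ad br x v = br x v.
Proof.
exact: (lfunE (HB.pack (br x) (GRing.isLinear.Build K V V *:%R _ (br_linear_r x)))).
Qed.

Lemma adP t x y : ad br (t *: x + y) = t *: ad br x + ad br y.
Proof. by apply/lfunP=> v; rewrite add_lfunE scale_lfunE !adE br_linear_l. Qed.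

Lemma ad_add x y : ad br (x + y) = ad br x + ad br y.
Proof. by rewrite -[x]scale1r adP !scale1r. Qed.

Lemma lie_anti x y : br x y = - br y x.
Proof.
have := br_alt (x + y).
rewrite -adE ad_add add_lfunE !linearD /= !adE !br_alt add0r addr0 => /eqP.
by rewrite addr_eq0 => /eqP.
Qed.

End LieBracket.

Definition lie_regular (K : fieldType) (V : vectType K) (br : V -> V -> V) (F : V) :=
  forall x, (\dim (centralizer br F) <= \dim (centralizer br x))%N.

Lemma limg_ad_centralizer_sub (K : numFieldType) (V : vectType K) (br : V -> V -> V) F F' :
  is_lie_bracket br -> lie_regular br F -> F' \in centralizer br F ->
  (limg (ad br F') <= limg (ad br F))%VS.
Proof.
move=> br_lie F_reg F'_centr; apply/subvP=> _ /memv_imgP[y _ ->].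
rewrite adE // lie_anti // -adE // rpredN.
apply: pencil_min_lker_img F'_centr => t.
by rewrite addrC -adP //; apply: F_reg.
Qed.

Lemma exists_argmin_nat (T : Type) (d : T -> nat) (x0 : T) :
  exists x, forall y, (d x <= d y)%N.
Proof.
have [n dx0] : exists n, d x0 = n by eexists.
elim/ltn_ind: n x0 dx0 => n IH x dx; subst n.
have [[y dy_lt]|no_smaller] := classic (exists y, (d y < d x)%N).
  exact: IH dy_lt y erefl.
by exists x => y; rewrite leqNgt; apply/negP => dy_lt; apply: no_smaller; exists y.
Qed.

Lemma principal_nilpotent_regular (K : fieldType) (V : vectType K) (br : V -> V -> V) F :
  principal_nilpotent br F -> lie_regular br F.
Proof.
case=> _ dim_rank.
have [x0 x0_min] := exists_argmin_nat (fun x => \dim (centralizer br x)) F.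
have x0_rank : is_lie_rank br (\dim (centralizer br x0)) by split; [exists x0 |].
by move=> x; rewrite (dim_rank _ x0_rank).
Qed.

Theorem lemma2p19 (R : realType) (V : vectType R[i]) (br : V -> V -> V)
  (hg : simple_lie br) (F F' : V)
  (hF : principal_nilpotent br F) (hF' : F' \in centralizer br F) :
  forall y : V, exists z : V, br F' y = br F z.
Proof.
move=> y; have br_lie := hg.1.
have Im_sub := limg_ad_centralizer_sub br_lie (principal_nilpotent_regular hF) hF'.
have /memv_imgP[z _ F'yFz] : br F' y \in limg (ad br F).
  by apply: (subvP Im_sub); rewrite -adE // memv_img ?memvf.
by exists z; rewrite F'yFz adE.
Qed.
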